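(* Let $\mathbb{R}^n_s$ be $\mathbb{R}^n$ with a non-degenerate symmetric bilinear form $\langle\cdot,\cdot\rangle$ of signature $(n-s,s)$, let $G\subset\mathrm{Iso}(\mathbb{R}^n_s)$ be a real Zariski-closed subgroup whose centralizer in $\mathrm{Iso}(\mathbb{R}^n_s)$ acts transitively on $\mathbb{R}^n$, and let $\mathfrak{g}$ be its Lie algebra with the symmetric bilinear form $(\cdot,\cdot)$ induced by the orbit metric. Then the commutator subalgebra $[\mathfrak{g},\mathfrak{g}]$ is totally isotropic with respect to $(\cdot,\cdot)$, and the center $\mathfrak{z}(\mathfrak{g})$ is orthogonal to $[\mathfrak{g},\mathfrak{g}]$.
   Context: Elements of $\mathfrak{g}$ are written $(A,v)$ (matrices $\begin{pmatrix}A&v\\0&0\end{pmatrix}$). For fixed $p\in\mathbb{R}^n$, the orbit metric form on $\mathfrak{g}$ is $(X,Y)=\langle A_Xp+v_X,\,A_Yp+v_Y\rangle$ for $X=(A_X,v_X)$, $Y=(A_Y,v_Y)$, i.e. the pullback of $\langle\cdot,\cdot\rangle$ on the orbit $G.p$ via the orbit map; it is invariant: $([X,Y],Z)=-(Y,[X,Z])$ for all $X,Y,Z\in\mathfrak{g}$. The group $G$ (and $\mathfrak{g}$) is 2-step nilpotent. *)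

From HB Require Import structures.
From mathcomp Require Import all_boot all_order all_algebra.
From mathcomp Require Import all_classical all_reals all_analysis.
Set Implicit Arguments. Unset Strict Implicit. Unset Printing Implicit Defensive.
Import Order.TTheory GRing.Theory Num.Theory.
Local Open Scope ring_scope.
Local Open Scope classical_set_scope.

Section Defs.
Variables (R : realType) (n : nat).

(* Affine maps of R^n are represented as (n+1)x(n+1) matrices
   [[A, v], [0, 1]] acting on columns (x; 1); Lie algebra elements (A,v)
   are the matrices [[A, v], [0, 0]]. *)
Notation M := 'M[R]_(n + 1).

Definition linpart (X : M) : 'M[R]_n := ulsubmx X.
Definition transpart (X : M) : 'cV[R]_n := ursubmx X.

Definition bform (J : 'M[R]_n) (x y : 'cV[R]_n) : R := (x^T *m J *m y) 0 0.

Definition nondeg_sym (J : 'M[R]_n) : Prop := J^T = J /\ J \in unitmx.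

Definition Iso (J : 'M[R]_n) : set M :=
  [set g | exists (A : 'M[R]_n) (v : 'cV[R]_n),
      g = block_mx A v 0 1 /\ A^T *m J *m A = J].

Definition act (g : M) (x : 'cV[R]_n) : 'cV[R]_n :=
  linpart g *m x + transpart g.

Definition is_subgroup (G : set M) : Prop :=
  G 1%:M /\ (forall g h, G g -> G h -> G (g *m h)) /\
  (forall g, G g -> g \in unitmx /\ G (invmx g)).

Inductive pterm : Type :=
| PConst of R
| PVar of 'I_(n + 1) & 'I_(n + 1)
| PAdd of pterm & pterm
| PMul of pterm & pterm.

Fixpoint peval (p : pterm) (g : M) : R :=
  match p with
  | PConst c => c
  | PVar i j => g i j
  | PAdd p q => peval p g + peval q g
  | PMul p q => peval p g * peval q g
  end.

Definition zariski_closed (G : set M) : Prop :=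
  exists P : set pterm, G = [set g | forall p, P p -> peval p g = 0].

Definition centralizer_in_Iso (J : 'M[R]_n) (G : set M) : set M :=
  [set h | Iso J h /\ forall g, G g -> h *m g = g *m h].

Definition transitive_on_Rn (C : set M) : Prop :=
  forall x y : 'cV[R]_n, exists h, C h /\ act h x = y.

Definition expm (X : M) : M :=
  \matrix_(i, j) (limn (fun N : nat =>
     ((\sum_(k < N) (k`!%:R)^-1 *: X ^+ k) i j : R^o)) : R).

Definition lie_alg (G : set M) : set M :=
  [set X | forall t : R, G (expm (t *: X))].

Definition lie_bracket (X Y : M) : M := X *m Y - Y *m X.

Definition derived_alg (g : set M) : set M :=
  [set Z | exists (k : nat) (c : 'I_k -> R) (X Y : 'I_k -> M),
      (forall i, g (X i) /\ g (Y i)) /\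
      Z = \sum_(i < k) c i *: lie_bracket (X i) (Y i)].

Definition center_alg (g : set M) : set M :=
  [set Z | g Z /\ forall X, g X -> lie_bracket Z X = 0].

Definition orbit_form (J : 'M[R]_n) (p : 'cV[R]_n) (X Y : M) : R :=
  bform J (linpart X *m p + transpart X) (linpart Y *m p + transpart Y).

End Defs.

From HB Require Import structures.
From mathcomp Require Import all_boot all_order all_algebra.
From mathcomp Require Import all_classical all_reals all_analysis.
From mathcomp Require Import ring lra.
Import Order.TTheory GRing.Theory Num.Theory.
Import numFieldNormedType.Exports.
Local Open Scope ring_scope.
Local Open Scope classical_set_scope.

Set Implicit Arguments.
Unset Strict Implicit.
Unset Printing Implicit Defensive.

(* Differentiating t |-> expm (t X) at t = 0 shows that every X = (A, v) of the
   Lie algebra has zero bottom row, has A skew for <.,.>, and commutes with the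
   centralizer C.  The field V_X q := A q + v is then C-equivariant, so by
   transitivity of C the function q |-> <V_X q, V_Y q> is constant; its
   derivative gives A_X V_Y + A_Y V_X = 0 identically, hence also
   A_X A_Y = - A_Y A_X.  These relations force A_X V_[Y,Z] = 0, and A_X V_Z = 0
   for Z central, while skewness turns <V_[X,Y], z> into -2 <V_Y, A_X z>; both
   claims follow by bilinearity. *)

Section EntrywiseNorm.
Variable R : realFieldType.

Definition mxnorm1 m1 m2 (A : 'M[R]_(m1, m2)) : R := \sum_i \sum_j `|A i j|.

Lemma mxnorm1_ge0 m1 m2 (A : 'M[R]_(m1, m2)) : 0 <= mxnorm1 A.
Proof. by apply: sumr_ge0 => i _; apply: sumr_ge0. Qed.

Lemma mxnorm1_entry m1 m2 (A : 'M[R]_(m1, m2)) i j : `|A i j| <= mxnorm1 A.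
Proof.
rewrite /mxnorm1 (bigD1 i) //= (bigD1 j) //= -addrA lerDl.
by rewrite addr_ge0 ?sumr_ge0 // => k _; rewrite sumr_ge0.
Qed.

Lemma mxnorm1_le m1 m2 (A : 'M[R]_(m1, m2)) e :
  (forall i j, `|A i j| <= e) -> mxnorm1 A <= m1%:R * m2%:R * e.
Proof.
move=> Ale; apply: (@le_trans _ _ (\sum_(i < m1) \sum_(j < m2) e)).
  by apply: ler_sum => i _; apply: ler_sum => j _.
by rewrite !sumr_const !card_ord -natrM mulr_natl -mulrnA mulnC.
Qed.

Lemma mxnorm1_eq0 m1 m2 (A : 'M[R]_(m1, m2)) : mxnorm1 A <= 0 -> A = 0.
Proof.
move=> A0; apply/matrixP => i j; rewrite mxE; apply/normr0_eq0/le_anti.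
by rewrite normr_ge0 andbT (le_trans (mxnorm1_entry _ i j)).
Qed.

Lemma mxnorm1D m1 m2 (A B : 'M[R]_(m1, m2)) : mxnorm1 (A + B) <= mxnorm1 A + mxnorm1 B.
Proof.
rewrite /mxnorm1 -big_split /=; apply: ler_sum => i _; rewrite -big_split /=.
by apply: ler_sum => j _; rewrite mxE ler_normD.
Qed.

Lemma mxnorm1N m1 m2 (A : 'M[R]_(m1, m2)) : mxnorm1 (- A) = mxnorm1 A.
Proof. by apply: eq_bigr => i _; apply: eq_bigr => j _; rewrite mxE normrN. Qed.

Lemma mxnorm1Z m1 m2 (a : R) (A : 'M[R]_(m1, m2)) :
  mxnorm1 (a *: A) = `|a| * mxnorm1 A.
Proof.
rewrite /mxnorm1 mulr_sumr; apply: eq_bigr => i _; rewrite mulr_sumr.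
by apply: eq_bigr => j _; rewrite mxE normrM.
Qed.

Lemma mxnorm1_tr m1 m2 (A : 'M[R]_(m1, m2)) : mxnorm1 A^T = mxnorm1 A.
Proof.
by rewrite /mxnorm1 exchange_big; apply: eq_bigr => i _; apply: eq_bigr => j _; rewrite mxE.
Qed.

Lemma mxnorm1M m1 m2 m3 (A : 'M[R]_(m1, m2)) (B : 'M[R]_(m2, m3)) :
  mxnorm1 (A *m B) <= mxnorm1 A * mxnorm1 B.
Proof.
rewrite /mxnorm1 mulr_suml; apply: ler_sum => i _.
apply: (@le_trans _ _ (\sum_j \sum_l `|A i l| * `|B l j|)).
  apply: ler_sum => j _; rewrite mxE; apply: (le_trans (ler_norm_sum _ _ _)).
  by apply: ler_sum => l _; rewrite normrM.
rewrite exchange_big mulr_suml /=; apply: ler_sum => l _.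
rewrite -mulr_sumr ler_wpM2l // (bigD1 l) //= lerDl.
by apply: sumr_ge0 => k _; apply: sumr_ge0.
Qed.

Lemma mxnorm1X m (A : 'M[R]_m) k : mxnorm1 (A ^+ k.+1) <= mxnorm1 A ^+ k.+1.
Proof.
elim: k => [|k IH]; first by rewrite !expr1.
rewrite exprSr [mxnorm1 A ^+ _]exprSr (le_trans (mxnorm1M _ _)) //.
by rewrite ler_wpM2r ?mxnorm1_ge0.
Qed.

Lemma mxnorm1_mxsub m1 m2 p1 p2 (f : 'I_p1 -> 'I_m1) (g : 'I_p2 -> 'I_m2)
    (A : 'M[R]_(m1, m2)) :
  mxnorm1 (mxsub f g A) <= p1%:R * p2%:R * mxnorm1 A.
Proof. by apply: mxnorm1_le => i j; rewrite mxE mxnorm1_entry. Qed.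

End EntrywiseNorm.

Section QuadraticRemainder.
Variable R : realFieldType.

Definition bigO_sq m1 m2 (F : R -> 'M[R]_(m1, m2)) : Prop :=
  exists d K, 0 < d /\ forall t, 0 < t < d -> mxnorm1 (F t) <= K * t ^+ 2.

Lemma bigO_sq_small m1 m2 (F : R -> 'M[R]_(m1, m2)) : bigO_sq F ->
  exists d K, [/\ 0 < d, d <= 1, 0 <= K &
                 forall t, 0 < t < d -> mxnorm1 (F t) <= K * t ^+ 2].
Proof.
case=> d [K [d0 FK]]; exists (Num.min d 1), `|K|; split => //.
- by rewrite lt_min d0 ltr01.
- by rewrite ge_min lexx orbT.
move=> t /andP[t0]; rewrite lt_min => /andP[td _].
apply: le_trans (FK t _) _; first by rewrite t0 td.
by rewrite ler_wpM2r ?ler_norm ?exprn_ge0 ?(ltW t0).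
Qed.

Lemma bigO_sq_ext m1 m2 (F G : R -> 'M[R]_(m1, m2)) :
  (forall t, 0 < t -> F t = G t) -> bigO_sq F -> bigO_sq G.
Proof.
move=> FG [d [K [d0 FK]]]; exists d, K; split => // t /andP[t0 td].
by rewrite -FG // FK ?t0.
Qed.

Lemma bigO_sqD m1 m2 (F G : R -> 'M[R]_(m1, m2)) :
  bigO_sq F -> bigO_sq G -> bigO_sq (fun t => F t + G t).
Proof.
case=> d1 [K1 [d10 FK]] [d2 [K2 [d20 GK]]].
exists (Num.min d1 d2), (K1 + K2); split; first by rewrite lt_min d10 d20.
move=> t /andP[t0]; rewrite lt_min => /andP[t1 t2].
by rewrite (le_trans (mxnorm1D _ _)) // mulrDl lerD ?FK ?GK ?t0 ?t1 ?t2.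
Qed.

Lemma bigO_sqN m1 m2 (F : R -> 'M[R]_(m1, m2)) :
  bigO_sq F -> bigO_sq (fun t => - F t).
Proof. by case=> d [K [d0 FK]]; exists d, K; split => // t ht; rewrite mxnorm1N FK. Qed.

Lemma bigO_sq_tr m1 m2 (F : R -> 'M[R]_(m1, m2)) :
  bigO_sq F -> bigO_sq (fun t => (F t)^T).
Proof. by case=> d [K [d0 FK]]; exists d, K; split => // t ht; rewrite mxnorm1_tr FK. Qed.

Lemma bigO_sqMl m1 m2 m3 (A : 'M[R]_(m1, m2)) (F : R -> 'M[R]_(m2, m3)) :
  bigO_sq F -> bigO_sq (fun t => A *m F t).
Proof.
case=> d [K [d0 FK]]; exists d, (mxnorm1 A * K); split => // t ht.
by rewrite (le_trans (mxnorm1M _ _)) // -mulrA ler_wpM2l ?mxnorm1_ge0 ?FK.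
Qed.

Lemma bigO_sqMr m1 m2 m3 (F : R -> 'M[R]_(m1, m2)) (A : 'M[R]_(m2, m3)) :
  bigO_sq F -> bigO_sq (fun t => F t *m A).
Proof.
case=> d [K [d0 FK]]; exists d, (mxnorm1 A * K); split => // t ht.
by rewrite (le_trans (mxnorm1M _ _)) // mulrC -mulrA ler_wpM2l ?mxnorm1_ge0 ?FK.
Qed.

Lemma bigO_sqM m1 m2 m3 (F : R -> 'M[R]_(m1, m2)) (G : R -> 'M[R]_(m2, m3)) :
  bigO_sq F -> bigO_sq G -> bigO_sq (fun t => F t *m G t).
Proof.
move=> /bigO_sq_small[d1 [K1 [d10 d11 K10 FK]]] /bigO_sq_small[d2 [K2 [d20 _ K20 GK]]].
exists (Num.min d1 d2), (K1 * K2); split; first by rewrite lt_min d10 d20.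
move=> t /andP[t0]; rewrite lt_min => /andP[t1 t2].
have t2_le1 : t ^+ 2 <= 1 by rewrite expr_le1 ?(ltW t0) ?(ltW (lt_le_trans t1 d11)).
apply: le_trans (mxnorm1M _ _) _.
apply: le_trans (ler_pM (mxnorm1_ge0 _) (mxnorm1_ge0 _) (FK t _) (GK t _)) _;
  rewrite ?t0 ?t1 ?t2 //.
have K0 : 0 <= K1 * K2 * t ^+ 2 by rewrite !mulr_ge0 ?exprn_ge0 ?(ltW t0).
rewrite -[leRHS]mulr1 mulrACA mulrA; exact: ler_wpM2l.
Qed.

Lemma bigO_sqZt m1 m2 (F : R -> 'M[R]_(m1, m2)) :
  bigO_sq F -> bigO_sq (fun t => t *: F t).
Proof.
move=> /bigO_sq_small[d [K [d0 d1 K0 FK]]]; exists d, K; split => // t /andP[t0 td].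
rewrite mxnorm1Z ger0_norm ?(ltW t0) // (le_trans (ler_wpM2l (ltW t0) (FK t _))) ?t0 ?td //.
by rewrite ler_piMl ?mulr_ge0 ?exprn_ge0 ?(ltW t0) ?(ltW (lt_le_trans td d1)).
Qed.

Lemma bigO_sq_sqr m1 m2 (A : 'M[R]_(m1, m2)) : bigO_sq (fun t => t ^+ 2 *: A).
Proof.
exists 1, (mxnorm1 A); split => // t /andP[t0 _].
by rewrite mxnorm1Z ger0_norm ?exprn_ge0 ?(ltW t0) // mulrC.
Qed.

Lemma bigO_sq_mxsub m1 m2 p1 p2 (f : 'I_p1 -> 'I_m1) (g : 'I_p2 -> 'I_m2)
    (F : R -> 'M[R]_(m1, m2)) :
  bigO_sq F -> bigO_sq (fun t => mxsub f g (F t)).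
Proof.
case=> d [K [d0 FK]]; exists d, (p1%:R * p2%:R * K); split => // t ht.
by rewrite (le_trans (mxnorm1_mxsub _ _ _)) // -[leRHS]mulrA ler_wpM2l ?mulr_ge0 ?FK.
Qed.

Lemma le_linear_eq0 (x K d : R) :
  0 <= x -> 0 < d -> (forall t, 0 < t < d -> x <= K * t) -> x = 0.
Proof.
move=> x0 d0 xK; apply/le_anti; rewrite x0 andbT; apply/ler_addgt0Pr => e e0.
have K1 : 0 < `|K| + 1 by rewrite ltr_wpDl.
pose t := Num.min (d / 2) (e / (`|K| + 1)).
have t0 : 0 < t by rewrite lt_min !divr_gt0.
have td : t < d by rewrite gt_min ltr_pdivrMr // ltr_pMr // ltr1n.
have te : t * (`|K| + 1) <= e by rewrite -ler_pdivlMr // ge_min lexx orbT.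
have := xK t; rewrite t0 td => /(_ isT) xKt.
have : K * t <= `|K| * t by rewrite ler_wpM2r ?(ltW t0) ?ler_norm.
by rewrite add0r; nra.
Qed.

Lemma bigO_sq_linear_eq0 m1 m2 (L : 'M[R]_(m1, m2)) F d : 0 < d ->
  (forall t, 0 < t < d -> t *: L + F t = 0) -> bigO_sq F -> L = 0.
Proof.
move=> d0 LF [d' [K [d'0 FK]]]; apply: mxnorm1_eq0.
suff -> : mxnorm1 L = 0 by [].
apply: (@le_linear_eq0 _ K (Num.min d d')); rewrite ?mxnorm1_ge0 ?lt_min ?d0 //.
move=> t /andP[t0]; rewrite lt_min => /andP[td td'].
have : t *: L = - F t by apply/eqP; rewrite -addr_eq0 LF ?t0.
move/(congr1 (@mxnorm1 _ _ _)); rewrite mxnorm1Z mxnorm1N ger0_norm ?(ltW t0) // => eL.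
by rewrite -(ler_pM2r t0) mulrC eL -mulrA -expr2 FK ?t0.
Qed.

End QuadraticRemainder.

Section SeriesRemainder.
Variable R : realType.

Lemma geometric_sum_le2 (b : R) N : 0 <= b <= 2^-1 -> \sum_(0 <= k < N) b ^+ k <= 2.
Proof.
case/andP=> b0 b1; elim: N => [|N IH]; first by rewrite big_geq.
rewrite big_nat_recl // expr0.
under eq_bigr do rewrite exprS.
rewrite -mulr_sumr -[2 in leRHS]/(1 + 1) lerD2l.
apply: le_trans (ler_pM b0 _ b1 IH) _; last by rewrite mulVf.
by rewrite sumr_ge0 // => i _; rewrite exprn_ge0.
Qed.

Lemma sum_nat_split2 (u : R ^nat) N : (2 <= N)%N ->
  \sum_(0 <= k < N) u k = u 0%N + u 1%N + \sum_(2 <= k < N) u k.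
Proof. by move=> N2; rewrite (big_cat_nat (n := 2)) //= big_nat_recl // big_nat1. Qed.

Lemma series_tail_le (c : R ^nat) (b : R) : 0 <= b <= 2^-1 ->
  (forall k, (2 <= k)%N -> `|c k| <= b ^+ k) ->
  forall N, \sum_(2 <= k < N) `|c k| <= 2 * b ^+ 2.
Proof.
move=> b01 cb N; rewrite (big_addn 0 N 2).
apply: (@le_trans _ _ (\sum_(0 <= i < N - 2) b ^+ 2 * b ^+ i)).
  by apply: ler_sum_nat => i _; rewrite -exprD addnC cb // leq_addl.
have b0 : 0 <= b by case/andP: b01.
by rewrite -mulr_sumr mulrC ler_wpM2r ?exprn_ge0 ?geometric_sum_le2.
Qed.

Lemma series_remainder_le (c : R ^nat) (b : R) : 0 <= b <= 2^-1 ->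
  (forall k, (2 <= k)%N -> `|c k| <= b ^+ k) ->
  cvgn (series c) /\ `|limn (series c) - c 0%N - c 1%N| <= 2 * b ^+ 2.
Proof.
move=> b01 cb; have tail := series_tail_le b01 cb.
have cvg_c : cvgn (series c).
  apply/normed_cvg/nondecreasing_is_cvgn.
    exact: nondecreasing_series (fun k _ _ => normr_ge0 (c k)).
  exists (`|c 0%N| + `|c 1%N| + 2 * b ^+ 2) => _ [N _ <-] /=.
  apply: le_trans (nondecreasing_series (fun k _ _ => normr_ge0 (c k)) (leq_addl 2 N)) _.
  by rewrite /= sum_nat_split2 ?leq_addl // lerD2l.
split=> //.
have r_cvg : series c - cst (c 0%N) - cst (c 1%N) @ \oo -->
               limn (series c) - c 0%N - c 1%N.
  exact: cvgB (cvgB cvg_c (cvg_cst _)) (cvg_cst _).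
have r_is_cvg := cvgP _ r_cvg.
rewrite -(cvg_lim _ r_cvg) // -lim_norm //.
apply: limr_le; first exact: is_cvg_norm.
near=> N; have N2 : (2 <= N)%N by near: N; exists 2%N.
rewrite !fctE /series /= sum_nat_split2 //.
set S := \sum_(2 <= k < N) c k; have -> : c 0%N + c 1%N + S - c 0%N - c 1%N = S by ring.
exact: le_trans (ler_norm_sum _ _ _) (tail N).
Unshelve. all: by end_near.
Qed.

End SeriesRemainder.

Section ExponentialFirstOrder.
Variables (R : realType) (n : nat).
Local Notation M := 'M[R]_(n + 1).

Lemma mx_exprZ (t : R) (X : M) k : (t *: X) ^+ k = t ^+ k *: X ^+ k.
Proof.
elim: k => [|k IH]; first by rewrite !expr0 scale1r.
by rewrite !exprS IH -!mulmxE -scalemxAl -scalemxAr scalerA.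
Qed.

Lemma expm_entry (X : M) (t : R) i j :
  expm (t *: X) i j =
  limn (series (fun k => (k`!%:R)^-1 * (t ^+ k * (X ^+ k) i j))).
Proof.
rewrite /expm mxE; congr (lim (_ @ \oo)); apply/funext => N.
rewrite /series /= summxE big_mkord; apply: eq_bigr => k _.
by rewrite !mxE mx_exprZ mxE.
Qed.

Lemma expm_entry_remainder (X : M) (t : R) i j :
  0 <= t -> t * mxnorm1 X <= 2^-1 ->
  `|(expm (t *: X) - 1%:M - t *: X) i j| <= 2 * (t * mxnorm1 X) ^+ 2.
Proof.
move=> t0 tX; have tX0 : 0 <= t * mxnorm1 X by rewrite mulr_ge0 ?mxnorm1_ge0.
pose c k := (k`!%:R)^-1 * (t ^+ k * (X ^+ k) i j).
have cb k : (2 <= k)%N -> `|c k| <= (t * mxnorm1 X) ^+ k.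
  case: k => [//|k] _; rewrite /c normrM normrM normrX ger0_norm // exprMn.
  rewrite -[leRHS]mul1r ler_pM ?mulr_ge0 ?exprn_ge0 //.
    by rewrite invf_le1 ?ltr0n ?fact_gt0 // ler1n fact_gt0.
  by rewrite ger0_norm // ler_wpM2l ?exprn_ge0 // (le_trans (mxnorm1_entry _ i j)) ?mxnorm1X.
have [_] := series_remainder_le (introT andP (conj tX0 tX)) cb.
suff -> : (expm (t *: X) - 1%:M - t *: X) i j = limn (series c) - c 0%N - c 1%N by [].
have -> : (expm (t *: X) - 1%:M - t *: X) i j =
          expm (t *: X) i j - (1%:M : M) i j - (t *: X) i j by rewrite !mxE.
by rewrite expm_entry /c !expr0 !expr1 invr1 !mul1r [(t *: X) i j]mxE.
Qed.

Lemma expm_first_order (X : M) : bigO_sq (fun t => expm (t *: X) - 1%:M - t *: X).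
Proof.
pose a := mxnorm1 X; have a0 : 0 <= a by exact: mxnorm1_ge0.
exists (2 * (a + 1))^-1, ((n + 1)%:R * (n + 1)%:R * (2 * a ^+ 2)); split.
  by rewrite invr_gt0 mulr_gt0 // ltr_wpDl.
move=> t /andP[t0 td].
have ta : t * a <= 2^-1.
  have : t * (2 * (a + 1)) < 1 by rewrite -ltr_pdivlMr ?div1r // mulr_gt0 // ltr_wpDl.
  have : 2 * 2^-1 = 1 :> R by rewrite mulfV.
  nra.
apply: le_trans (mxnorm1_le (fun i j => expm_entry_remainder i j (ltW t0) ta)) _.
by rewrite le_eqVlt; apply/orP; left; apply/eqP; rewrite /a; ring.
Qed.

End ExponentialFirstOrder.

Lemma mxsubDZ (R : pzRingType) m1 m2 p1 p2 (f : 'I_p1 -> 'I_m1) (g : 'I_p2 -> 'I_m2)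
    (U V W : 'M[R]_(m1, m2)) (t : R) :
  mxsub f g (U + t *: V + W) = mxsub f g U + t *: mxsub f g V + mxsub f g W.
Proof. by apply/matrixP => i j; rewrite !mxE. Qed.

Lemma form_quadratic_expand (R : comPzRingType) m (J A E : 'M[R]_m) (t : R) :
  (1%:M + t *: A + E)^T *m J *m (1%:M + t *: A + E) - J - t *: (A^T *m J + J *m A) =
  t ^+ 2 *: (A^T *m J *m A) + (E^T *m J + t *: (E^T *m J *m A) + E^T *m J *m E)
  + (J *m E + t *: (A^T *m J *m E)).
Proof.
rewrite !linearD /= linearZ /= trmx1 ?(mulmxDl, mulmxDr, mul1mx, mulmx1).
rewrite -?(scalemxAl, scalemxAr) ?scalerA ?mulmxA.
by apply/matrixP => i j; rewrite !mxE; ring.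
Qed.

Section TangentVectors.
Variables (R : realType) (n : nat).
Local Notation M := 'M[R]_(n + 1).

Let remainder (X : M) t := expm (t *: X) - 1%:M - t *: X.

Let expm_expand (X : M) t : expm (t *: X) = 1%:M + t *: X + remainder X t.
Proof. by rewrite /remainder; apply/matrixP => i j; rewrite !mxE; ring. Qed.

Lemma commute_tangent (X h : M) :
  (forall t, 0 < t -> h *m expm (t *: X) = expm (t *: X) *m h) -> h *m X = X *m h.
Proof.
move=> hX; apply/eqP; rewrite -subr_eq0; apply/eqP.
have rem : bigO_sq (remainder X) := expm_first_order X.
apply: (@bigO_sq_linear_eq0 _ _ _ _ (fun t => h *m remainder X t - remainder X t *m h) 1) => //.
  move=> t /andP[t0 _]; move: (hX t t0); rewrite !expm_expand.
  rewrite !mulmxDr !mulmxDl mulmx1 mul1mx -scalemxAl -scalemxAr => e.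
  by apply/matrixP => i j; move/matrixP: e => /(_ i j); rewrite !mxE => e; lra.
by apply: bigO_sqD; [exact: bigO_sqMl | exact/bigO_sqN/bigO_sqMr].
Qed.

Lemma affine_tangent (X : M) :
  (forall t, 0 < t -> exists B w, expm (t *: X) = block_mx B w 0 1) ->
  dlsubmx X = 0 /\ drsubmx X = 0.
Proof.
move=> hX; have rem : bigO_sq (remainder X) := expm_first_order X; split.
- apply: (@bigO_sq_linear_eq0 _ _ _ _ (fun t => dlsubmx (remainder X t)) 1) => //.
    move=> t /andP[t0 _]; have [B [w e]] := hX t t0.
    move: (congr1 dlsubmx e); rewrite block_mxKdl expm_expand !dlsubmxEsub mxsubDZ.
    by rewrite -dlsubmxEsub scalar_mx_block block_mxKdl add0r.
  by under eq_fun do rewrite dlsubmxEsub; exact: bigO_sq_mxsub.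
- apply: (@bigO_sq_linear_eq0 _ _ _ _ (fun t => drsubmx (remainder X t)) 1) => //.
    move=> t /andP[t0 _]; have [B [w e]] := hX t t0.
    move: (congr1 drsubmx e); rewrite block_mxKdr expm_expand !drsubmxEsub mxsubDZ.
    rewrite -drsubmxEsub scalar_mx_block block_mxKdr -addrA => e1.
    by apply: (addrI 1%:M); rewrite addr0.
  by under eq_fun do rewrite drsubmxEsub; exact: bigO_sq_mxsub.
Qed.

Lemma isometry_tangent (J : 'M[R]_n) (X : M) :
  (forall t, 0 < t -> Iso J (expm (t *: X))) -> (ulsubmx X)^T *m J + J *m ulsubmx X = 0.
Proof.
move=> hX; set A := ulsubmx X.
pose E t := ulsubmx (remainder X t).
have remE : bigO_sq E.
  by rewrite /E; under eq_fun do rewrite ulsubmxEsub; exact/bigO_sq_mxsub/expm_first_order.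
pose Q t := (1%:M + t *: A + E t)^T *m J *m (1%:M + t *: A + E t) - J
            - t *: (A^T *m J + J *m A).
apply: (@bigO_sq_linear_eq0 _ _ _ _ Q 1) => //.
  move=> t /andP[t0 _]; have [B [w [e BJ]]] := hX t t0.
  have eB : B = 1%:M + t *: A + E t.
    move: (congr1 ulsubmx e); rewrite block_mxKul expm_expand !ulsubmxEsub mxsubDZ.
    by rewrite -!ulsubmxEsub scalar_mx_block block_mxKul.
  by rewrite /Q -eB BJ; apply/matrixP => i j; rewrite !mxE; ring.
apply: (bigO_sq_ext (fun t _ => esym (form_quadratic_expand J A (E t) t))).
have remEt := bigO_sq_tr remE.
apply: bigO_sqD; first apply: bigO_sqD.
- exact: bigO_sq_sqr.
- apply: bigO_sqD; first apply: bigO_sqD.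
  + exact: bigO_sqMr.
  + by apply/bigO_sqZt/bigO_sqMr; exact: bigO_sqMr.
  + by apply: bigO_sqM => //; exact: bigO_sqMr.
- by apply: bigO_sqD; [|apply: bigO_sqZt]; exact: bigO_sqMl.
Qed.

End TangentVectors.

Lemma mulmx_cV_eq0 (R : pzRingType) m1 m2 (A : 'M[R]_(m1, m2)) :
  (forall v : 'cV[R]_m2, A *m v = 0) -> A = 0.
Proof.
move=> Av; apply/matrixP => i j.
by move: (Av (delta_mx j 0)); rewrite -colE => /matrixP/(_ i 0); rewrite !mxE.
Qed.

Lemma addmx_self_eq0 (R : numFieldType) m1 m2 (A : 'M[R]_(m1, m2)) : A + A = 0 -> A = 0.
Proof. by move=> /eqP; rewrite -mulr2n -scaler_nat scaler_eq0 pnatr_eq0 => /eqP. Qed.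

Section BilinearForm.
Variables (R : realType) (n : nat) (J : 'M[R]_n).
Local Notation bf := (bform J).

Lemma bformDl x y z : bf (x + y) z = bf x z + bf y z.
Proof. by rewrite /bform linearD /= !mulmxDl mxE. Qed.

Lemma bformDr x y z : bf z (x + y) = bf z x + bf z y.
Proof. by rewrite /bform !mulmxDr mxE. Qed.

Lemma bformZl (a : R) x z : bf (a *: x) z = a * bf x z.
Proof. by rewrite /bform linearZ /= -!scalemxAl mxE. Qed.

Lemma bformZr (a : R) x z : bf z (a *: x) = a * bf z x.
Proof. by rewrite /bform -!scalemxAr mxE. Qed.

Lemma bform0l x : bf 0 x = 0.
Proof. by rewrite /bform trmx0 !mul0mx mxE. Qed.

Lemma bform0r x : bf x 0 = 0.
Proof. by rewrite /bform mulmx0 mxE. Qed.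

Lemma bform_iso (B : 'M[R]_n) x y : B^T *m J *m B = J -> bf (B *m x) (B *m y) = bf x y.
Proof. by move=> BJ; rewrite /bform trmx_mul !mulmxA -(mulmxA x^T) -(mulmxA x^T) BJ. Qed.

Lemma bform_skew (A : 'M[R]_n) x y :
  A^T *m J + J *m A = 0 -> bf (A *m x) y = - bf x (A *m y).
Proof.
move=> AJ; have AJN : A^T *m J = - (J *m A) by apply/eqP; rewrite -addr_eq0 AJ.
by rewrite /bform trmx_mul -(mulmxA x^T A^T J) AJN mulmxN mulNmx mxE !mulmxA.
Qed.

Hypothesis J_sym : J^T = J.

Lemma bform_sym x y : bf x y = bf y x.
Proof.
rewrite /bform; transitivity ((x^T *m J *m y)^T 0 0); first by rewrite [in RHS]mxE.
by rewrite !trmx_mul trmxK J_sym mulmxA.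
Qed.

Hypothesis J_unit : J \in unitmx.

Lemma bform_nondeg u : (forall w, bf w u = 0) -> u = 0.
Proof.
move=> uJ; rewrite -(mulKmx J_unit u); suff -> : J *m u = 0 by rewrite mulmx0.
apply/matrixP => i j; rewrite (ord1 j) !mxE.
by move: (uJ (delta_mx i 0)); rewrite /bform trmx_delta -mulmxA -rowE !mxE.
Qed.

End BilinearForm.

Lemma lie_bracket_block (R : realType) m (A B : 'M[R]_m) (v w : 'cV[R]_m) :
  @lie_bracket _ m (block_mx A v 0 0) (block_mx B w 0 0) =
  block_mx (A *m B - B *m A) (A *m w - B *m v) 0 0.
Proof.
rewrite /lie_bracket !mulmx_block !mulmx0 !mul0mx !addr0.
by rewrite opp_block_mx add_block_mx !subrr.
Qed.

Section AffineFields.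
Variables (R : realType) (n : nat).
Local Notation M := 'M[R]_(n + 1).

Definition iso_alg (J : 'M[R]_n) : set M :=
  [set X | [/\ dlsubmx X = 0, drsubmx X = 0 & (linpart X)^T *m J + J *m linpart X = 0]].

Definition commutant (C : set M) : set M := [set X | forall h, C h -> h *m X = X *m h].

Definition vfield (X : M) (q : 'cV[R]_n) : 'cV[R]_n := linpart X *m q + transpart X.

Lemma orbit_formE J p X Y : orbit_form J p X Y = bform J (vfield X p) (vfield Y p).
Proof. by []. Qed.

Lemma lie_alg_iso_alg J (G : set M) : G `<=` Iso J -> lie_alg G `<=` iso_alg J.
Proof.
move=> G_iso X gX; have X_iso t : 0 < t -> Iso J (expm (t *: X)) by move=> _; exact: G_iso.
have [|dl0 dr0] := affine_tangent (X := X).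
  by move=> t /X_iso[B [w [e _]]]; exists B, w.
by split => //; exact: isometry_tangent X_iso.
Qed.

Lemma lie_alg_commutant J (G : set M) : lie_alg G `<=` commutant (centralizer_in_Iso J G).
Proof. by move=> X gX h [_ hG]; apply: commute_tangent => t _; exact: hG. Qed.

Lemma commutant_bracket C X Y :
  commutant C X -> commutant C Y -> commutant C (lie_bracket X Y).
Proof.
move=> XC YC h hC.
have comm_mul Z W : h *m Z = Z *m h -> h *m W = W *m h -> h *m (Z *m W) = Z *m W *m h.
  by move=> hZ hW; rewrite mulmxA hZ -mulmxA hW mulmxA.
by rewrite /lie_bracket mulmxBr mulmxBl !comm_mul ?(XC h hC) ?(YC h hC).
Qed.

Section IsoAlg.
Variable J : 'M[R]_n.

Lemma iso_alg_block X : iso_alg J X -> X = block_mx (linpart X) (transpart X) 0 0.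
Proof. by case=> dl0 dr0 _; rewrite -{1}(submxK X) dl0 dr0. Qed.

Lemma linpart_bracket X Y : iso_alg J X -> iso_alg J Y ->
  linpart (lie_bracket X Y) = linpart X *m linpart Y - linpart Y *m linpart X.
Proof.
move=> /iso_alg_block eX /iso_alg_block eY.
by rewrite {1}eX {1}eY lie_bracket_block /linpart block_mxKul.
Qed.

Lemma transpart_bracket X Y : iso_alg J X -> iso_alg J Y ->
  transpart (lie_bracket X Y) = linpart X *m transpart Y - linpart Y *m transpart X.
Proof.
move=> /iso_alg_block eX /iso_alg_block eY.
by rewrite {1}eX {1}eY lie_bracket_block /transpart block_mxKur.
Qed.

Lemma iso_alg_bracket X Y : iso_alg J X -> iso_alg J Y -> iso_alg J (lie_bracket X Y).
Proof.
move=> XJ YJ; have e := linpart_bracket XJ YJ.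
move: (iso_alg_block XJ) (iso_alg_block YJ) => eX eY.
split; try by rewrite eX eY lie_bracket_block ?block_mxKdl ?block_mxKdr.
case: XJ YJ => _ _ AJ [_ _ BJ]; rewrite e; move: (linpart X) (linpart Y) AJ BJ => A B AJ BJ.
have AJN : A^T *m J = - (J *m A) by apply/eqP; rewrite -addr_eq0 AJ.
have BJN : B^T *m J = - (J *m B) by apply/eqP; rewrite -addr_eq0 BJ.
rewrite linearB /= !trmx_mul mulmxBl -!mulmxA AJN BJN !mulmxN !mulmxA AJN BJN.
by rewrite !mulNmx !opprK mulmxBr !mulmxA addrA subrK subrr.
Qed.

Lemma vfield_bracket X Y q : iso_alg J X -> iso_alg J Y ->
  vfield (lie_bracket X Y) q = linpart X *m vfield Y q - linpart Y *m vfield X q.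
Proof.
move=> XJ YJ; rewrite /vfield linpart_bracket // transpart_bracket //.
rewrite !mulmxDr mulmxBl !mulmxA.
by apply/matrixP => i j; rewrite !mxE; ring.
Qed.

Lemma vfield_act X h B w q : iso_alg J X -> h = block_mx B w 0 1 ->
  h *m X = X *m h -> vfield X (act h q) = B *m vfield X q.
Proof.
move=> /iso_alg_block eX eh; rewrite eh {1 2}eX !mulmx_block.
rewrite ?mulmx0 ?mul0mx ?addr0 ?add0r ?mulmx1 => /eq_block_mx[AB vB _ _].
rewrite /vfield /act /linpart /transpart block_mxKul block_mxKur -/(linpart X) -/(transpart X).
by rewrite !mulmxDr vB !mulmxA AB addrA.
Qed.

End IsoAlg.

Lemma vfield_shift X q w (s : R) : vfield X (q + s *: w) = vfield X q + s *: (linpart X *m w).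
Proof. by rewrite /vfield mulmxDr scalemxAr addrAC. Qed.

Lemma vfield0 q : vfield 0 q = 0.
Proof.
rewrite /vfield.
have -> : linpart (0 : M) = 0 by apply/matrixP => i j; rewrite !mxE.
have -> : transpart (0 : M) = 0 by apply/matrixP => i j; rewrite !mxE.
by rewrite mul0mx addr0.
Qed.

Lemma vfieldZD (a : R) X Y q : vfield (a *: X + Y) q = a *: vfield X q + vfield Y q.
Proof.
rewrite /vfield.
have -> : linpart (a *: X + Y) = a *: linpart X + linpart Y.
  by apply/matrixP => i j; rewrite !mxE.
have -> : transpart (a *: X + Y) = a *: transpart X + transpart Y.
  by apply/matrixP => i j; rewrite !mxE.
by rewrite mulmxDl -scalemxAl scalerDr addrACA.
Qed.

Lemma derived_alg_ind (g : set M) (P : M -> Prop) :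
  P 0 -> (forall a U V, P U -> P V -> P (a *: U + V)) ->
  (forall X Y, g X -> g Y -> P (lie_bracket X Y)) -> derived_alg g `<=` P.
Proof.
move=> P0 PZD Pg _ [k [c [X [Y [gXY ->]]]]].
by apply: big_rec => // i U _ PU; apply: PZD => //; apply: Pg; case: (gXY i).
Qed.

End AffineFields.

Section OrbitForm.
Variables (R : realType) (n : nat) (J : 'M[R]_n) (C : set 'M[R]_(n + 1)).
Hypotheses (J_sym : J^T = J) (J_unit : J \in unitmx).
Hypotheses (C_iso : C `<=` Iso J) (C_trans : transitive_on_Rn C).
Local Notation bf := (bform J).
Local Notation admissible := (iso_alg J `&` commutant C).

Lemma admissible_bracket X Y :
  admissible X -> admissible Y -> admissible (lie_bracket X Y).
Proof.
by move=> [XJ XC] [YJ YC]; split; [exact: iso_alg_bracket | exact: commutant_bracket].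
Qed.

Lemma bform_vfield_const X Y p q : admissible X -> admissible Y ->
  bf (vfield X q) (vfield Y q) = bf (vfield X p) (vfield Y p).
Proof.
move=> [XJ XC] [YJ YC]; have [h [hC <-]] := C_trans p q.
have [B [w [eh BJ]]] := C_iso hC.
by rewrite (vfield_act p XJ eh (XC h hC)) (vfield_act p YJ eh (YC h hC)) bform_iso.
Qed.

Lemma linpart_vfield_anticomm X Y q : admissible X -> admissible Y ->
  linpart X *m vfield Y q + linpart Y *m vfield X q = 0.
Proof.
move=> KX KY; apply: (bform_nondeg J_unit) => w.
(* s |-> <V_X (q + s w), V_Y (q + s w)> is constant, so its linear
   coefficient vanishes: compare its values at s = 1 and s = -1. *)
have e1 := bform_vfield_const q (q + 1 *: w) KX KY.
have e2 := bform_vfield_const q (q + (-1) *: w) KX KY.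
have [[_ _ AX] _] := KX; have [[_ _ AY] _] := KY.
have s1 := bform_skew w (vfield Y q) AX.
have s2 : bf (vfield X q) (linpart Y *m w) = - bf w (linpart Y *m vfield X q).
  by rewrite bform_sym // bform_skew.
move: e1 e2 s1 s2; rewrite !vfield_shift !bformDl !bformDr !bformZl !bformZr.
lra.
Qed.

Lemma linpart_vfield_antisym X Y q : admissible X -> admissible Y ->
  linpart X *m vfield Y q = - (linpart Y *m vfield X q).
Proof. by move=> KX KY; apply/eqP; rewrite -addr_eq0 linpart_vfield_anticomm. Qed.

Lemma linpart_anticomm X Y : admissible X -> admissible Y ->
  linpart X *m linpart Y = - (linpart Y *m linpart X).
Proof.
move=> KX KY; apply/eqP; rewrite -addr_eq0; apply/eqP/mulmx_cV_eq0 => q.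
have e0 := linpart_vfield_anticomm 0 KX KY; have eq_q := linpart_vfield_anticomm q KX KY.
rewrite /vfield !mulmx0 !add0r in e0; rewrite /vfield !mulmxDr !mulmxA addrACA e0 addr0 in eq_q.
by rewrite mulmxDl.
Qed.

Lemma linpart_vfield_bracket X Y Z q : admissible X -> admissible Y -> admissible Z ->
  linpart X *m vfield (lie_bracket Y Z) q = 0.
Proof.
move=> KX KY KZ.
(* Both A_X V_[Y,Z] and A_[Y,Z] V_X equal 2 y, while their sum is 0. *)
set y := linpart X *m (linpart Y *m vfield Z q).
have eV : linpart X *m vfield (lie_bracket Y Z) q = y + y.
  by rewrite (vfield_bracket q (proj1 KY) (proj1 KZ)) (linpart_vfield_antisym q KZ KY) opprK mulmxDr.
have eA : linpart (lie_bracket Y Z) *m vfield X q = y + y.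
  rewrite (linpart_bracket (proj1 KY) (proj1 KZ)).
  rewrite (linpart_anticomm KZ KY) opprK mulmxDl -!mulmxA (linpart_vfield_antisym q KZ KX).
  by rewrite mulmxN !mulmxA (linpart_anticomm KY KX) mulNmx opprK -!mulmxA.
have := linpart_vfield_anticomm q KX (admissible_bracket KY KZ).
by rewrite eV eA; exact: addmx_self_eq0.
Qed.

Lemma bform_vfield_bracket_eq0 X Y q z : admissible X -> admissible Y ->
  linpart X *m z = 0 -> bf (vfield (lie_bracket X Y) q) z = 0.
Proof.
move=> KX KY Xz; have [[_ _ AX] _] := KX.
have eV : vfield (lie_bracket X Y) q = linpart X *m (vfield Y q + vfield Y q).
  by rewrite (vfield_bracket q (proj1 KX) (proj1 KY)) (linpart_vfield_antisym q KY KX)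
     opprK -mulmxDr.
by rewrite eV bform_skew // Xz bform0r oppr0.
Qed.

Lemma linpart_vfield_commuting Z X q : admissible Z -> admissible X ->
  lie_bracket Z X = 0 -> linpart X *m vfield Z q = 0.
Proof.
move=> KZ KX ZX; apply: addmx_self_eq0.
have := vfield_bracket q (proj1 KZ) (proj1 KX).
rewrite ZX vfield0 (linpart_vfield_antisym q KZ KX) => /esym/eqP.
by rewrite -opprD oppr_eq0 => /eqP.
Qed.

Variable g : set 'M[R]_(n + 1).
Hypothesis g_adm : g `<=` admissible.

Lemma linpart_vfield_derived X U q : g X -> derived_alg g U -> linpart X *m vfield U q = 0.
Proof.
move=> gX; move: U; apply: derived_alg_ind => [|a U V eU eV|Y Z gY gZ].
- by rewrite vfield0 mulmx0.
- by rewrite vfieldZD mulmxDr -scalemxAr eU eV scaler0 addr0.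
- exact: linpart_vfield_bracket (g_adm gX) (g_adm gY) (g_adm gZ).
Qed.

Lemma bform_vfield_derived U q z : derived_alg g U ->
  (forall X, g X -> linpart X *m z = 0) -> bf (vfield U q) z = 0.
Proof.
move=> dU Xz; move: U dU; apply: derived_alg_ind => [|a U V eU eV|X Y gX gY].
- by rewrite vfield0 bform0l.
- by rewrite vfieldZD bformDl bformZl eU eV mulr0 addr0.
- exact: bform_vfield_bracket_eq0 (g_adm gX) (g_adm gY) (Xz X gX).
Qed.

End OrbitForm.

Unset Implicit Arguments.

Theorem lemma4p7 (R : realType) (n : nat) (J : 'M[R]_n)
  (G : set 'M[R]_(n + 1)) :
  nondeg_sym J ->
  G `<=` Iso J -> is_subgroup G -> zariski_closed G ->
  transitive_on_Rn (centralizer_in_Iso J G) ->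
  forall p : 'cV[R]_n,
    (forall U V, derived_alg (lie_alg G) U -> derived_alg (lie_alg G) V ->
       orbit_form J p U V = 0) /\
    (forall Z U, center_alg (lie_alg G) Z -> derived_alg (lie_alg G) U ->
       orbit_form J p Z U = 0).
Proof.
move=> [J_sym J_unit] G_iso _ _ C_trans p.
have C_iso : centralizer_in_Iso J G `<=` Iso J by move=> h [].
have g_adm : lie_alg G `<=` iso_alg J `&` commutant (centralizer_in_Iso J G).
  by move=> X gX; split; [exact: lie_alg_iso_alg gX | exact: lie_alg_commutant].
have orthogonal := bform_vfield_derived J_sym J_unit C_iso C_trans g_adm.
split=> [U V dU dV | Z U [gZ Zcen] dU].
- rewrite orbit_formE; apply: orthogonal => // X gX.
  exact: (linpart_vfield_derived J_sym J_unit C_iso C_trans g_adm p gX dV).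
- rewrite orbit_formE bform_sym //; apply: orthogonal => // X gX.
  exact: (linpart_vfield_commuting J_sym J_unit C_iso C_trans p
           (g_adm _ gZ) (g_adm _ gX) (Zcen X gX)).
Qed.
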